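(* Let $h\in(0,2h_c(T))$, $h\neq h_c(T)$, and let $k,N$ be integers with $2^k<N$. There exists a positive constant $C_{17}$ (independent of $k$, $N$, $t$ and of the event) such that for every increasing event $A\in\mathcal F_{S(2^k)}$ and every $t\in[0,1]$, \[ C_{17}\frac{|h-h_c(T)|}{\mathfrak KT}\sum_{v\in\mathrm{Supp}(A)}\mu^N_t\big(A\cap\Delta_vA\big)\le\frac{d}{dt}\mu^N_t(A). \]
   Context: Ising model on $\mathbf{Z}^2$ with spins $\omega\in\{\pm1\}^{\mathbf Z^2}$, nearest-neighbour ferromagnetic interaction, external field $h$, temperature $T$, Boltzmann constant $\mathfrak K$; $T>T_c$ fixed; $h_c(T)$ is the threshold $\inf\{h:\mu_{T,h}(\#\mathbf C_0^+=\infty)>0\}$ for percolation of the $(+)$-cluster (cluster of $+1$ spins under nearest-neighbour adjacency) of the origin under the Gibbs measure $\mu_{T,h}$. $S(n)=[-n,n]^2$; $\mathcal F_V$ is the $\sigma$-algebra generated by the spins in $V$. Periodic measures: $\mu^N_{T,h}$ is the Gibbs measure on the torus obtained from $S(N)$ by identifying opposite sides; $h(t)=h_c(T)+t(h-h_c(T))$ if $h>h_c(T)$, $h(t)=h+t(h_c(T)-h)$ if $h<h_c(T)$; $\mu^N_t=\mu^N_{T,h(t)}$. An event is increasing if it is preserved by changing spins from $-1$ to $+1$. For $v$ and $\omega$, $\omega^v$ is $\omega$ with the spin at $v$ flipped; $\Delta_vA=\{\omega:\mathbf 1_A(\omega)+\mathbf 1_A(\omega^v)=1\}$ (configurations where $v$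 is pivotal for $A$), and $\mathrm{Supp}(A)=\{v\in\mathbf Z^2:\Delta_vA\ne\emptyset\}$. *)

From HB Require Import structures.
From mathcomp Require Import all_boot all_order all_algebra finmap.
From mathcomp Require Import all_classical all_reals all_analysis.
Set Implicit Arguments. Unset Strict Implicit. Unset Printing Implicit Defensive.
Import Order.TTheory GRing.Theory Num.Theory.
Local Open Scope classical_set_scope.
Local Open Scope ring_scope.

Definition site := (int * int)%type.
Definition config := site -> bool.

Definition spin {R : realType} (w : config) (x : site) : R :=
  if w x then 1 else -1.

Definition adj (x y : site) : bool :=
  (`|x.1 - y.1|%N + `|x.2 - y.2|%N == 1)%N.

Definition nbrs (x : site) : seq site :=
  [:: (x.1 + 1, x.2); (x.1 - 1, x.2); (x.1, x.2 + 1); (x.1, x.2 - 1)].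

Definition inbox (n : nat) (x : site) : bool :=
  (`|x.1|%N <= n)%N && (`|x.2|%N <= n)%N.

Definition zrange (n : nat) : seq int :=
  [seq (i%:Z - n%:Z) | i <- iota 0 (n.*2.+1)].
Definition boxseq (n : nat) : seq site :=
  [seq (a, b) | a <- zrange n, b <- zrange n].

(* A is in F_V: it depends only on the spins in V
   (for finite V this is exactly membership in the sigma-algebra
    generated by the spins in V) *)
Definition local_in (V : site -> bool) (A : set config) : Prop :=
  forall w w' : config, (forall x, V x -> w x = w' x) -> (A w <-> A w').

Definition increasing (A : set config) : Prop :=
  forall w w' : config, (forall x, w x ==> w' x) -> A w -> A w'.

Definition flip (v : site) (w : config) : config :=
  fun x => if x == v then ~~ w v else w x.

Definition Delta (v : site) (A : set config) : set config :=
  [set w | (A w /\ ~ A (flip v w)) \/ (~ A w /\ A (flip v w))].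

Definition Supp (A : set config) : set site :=
  [set v | Delta v A !=set0].

Definition cylinders : set (set config) :=
  [set [set w : config | w x] | x in [set: site]].
Definition Omega := g_sigma_algebraType cylinders.

Definition glue (L : {fset site}) (xi : (size L).-tuple bool) (eta : config)
  : config :=
  fun x => if x \in L then nth false xi (index x L) else eta x.

(* Hamiltonian (with a minus sign) of the interactions touching L:
   sum_{x in L} h w_x + sum_{edges {x,y} meeting L} w_x w_y  *)
Definition localH {R : realType} (h : R) (L : {fset site}) (w : config) : R :=
  \sum_(x <- L) (h * spin w x +
     \sum_(y <- nbrs x) (if y \in L then 2^-1 else 1) * spin w x * spin w y).

Definition gammaL {R : realType} (beta h : R) (L : {fset site})
  (B : set config) (eta : config) : R :=
  (\sum_(xi : (size L).-tuple bool)
      (if `[< B (glue xi eta) >] then expR (beta * localH h L (glue xi eta))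
       else 0)) /
  (\sum_(xi : (size L).-tuple bool) expR (beta * localH h L (glue xi eta))).

Definition Gibbs {R : realType} (beta h : R) (P : probability Omega R) : Prop :=
  forall (L : {fset site}) (B : set Omega), measurable B ->
    P B = (\int[P]_eta (gammaL beta h L B eta)%:E)%E.

Definition beta_of {R : realType} (K T : R) : R := (K * T)^-1.

Definition Tc {R : realType} (K : R) : R :=
  sup [set T : R | 0 < T /\
        exists P1 P2 : probability Omega R,
          [/\ Gibbs (beta_of K T) 0 P1, Gibbs (beta_of K T) 0 P2 &
              exists B : set Omega, measurable B /\ P1 B <> P2 B]].

Definition pconn (w : config) (x y : site) : Prop :=
  exists p : seq site,
    [/\ w x, path (fun a b => adj a b && w b) x p & last x p = y].
Definition plus_cluster (w : config) : set site := [set y | pconn w (0, 0) y].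
Definition percolates : set Omega := [set w | ~ finite_set (plus_cluster w)].

Definition hc {R : realType} (K T : R) : R :=
  inf [set h : R | exists P : probability Omega R,
         Gibbs (beta_of K T) h P /\ (0 < P percolates)%E].

(* S(N) with opposite sides identified: the discrete torus of side 2N.
   (For N > 0, (N.*2).-1.+1 = 2N.) *)
Definition tside (N : nat) := 'I_(N.*2).-1.+1.
Definition tsite (N : nat) := (tside N * tside N)%type.
Definition tconfig (N : nat) := {ffun tsite N -> bool}.

Definition tsucc (N : nat) (i : tside N) : tside N :=
  inord (i.+1 %% (N.*2))%N.
Definition tright N (x : tsite N) : tsite N := (tsucc x.1, x.2).
Definition tup N (x : tsite N) : tsite N := (x.1, tsucc x.2).

Definition tspin {R : realType} N (s : tconfig N) (x : tsite N) : R :=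
  if s x then 1 else -1.

(* minus the torus Hamiltonian: sum over edges of s_x s_y + h sum_x s_x *)
Definition torusH {R : realType} N (h : R) (s : tconfig N) : R :=
  \sum_(x : tsite N)
     (tspin s x * (tspin s (tright x) + tspin s (tup x)) + h * tspin s x).

Definition tproj (N : nat) (x : site) : tsite N :=
  (inord `|(x.1 %% (N.*2)%:Z)%Z|%N, inord `|(x.2 %% (N.*2)%:Z)%Z|%N).
Definition text N (s : tconfig N) : config := fun x => s (tproj N x).

Definition muN {R : realType} (K T h : R) (N : nat) (A : set config) : R :=
  (\sum_(s : tconfig N)
     (if `[< A (text s) >] then expR (beta_of K T * torusH h s) else 0)) /
  (\sum_(s : tconfig N) expR (beta_of K T * torusH h s)).

Definition hpath {R : realType} (K T h t : R) : R :=
  if hc K T < h then hc K T + t * (h - hc K T) else h + t * (hc K T - h).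

Definition mut {R : realType} (K T h : R) (N : nat) (t : R) (A : set config) : R :=
  muN K T (hpath K T h t) N A.

From HB Require Import structures.
From mathcomp Require Import all_boot all_order all_algebra finmap.
From mathcomp Require Import all_classical all_reals all_analysis.
From mathcomp Require Import ring lra zify.
Set Implicit Arguments. Unset Strict Implicit. Unset Printing Implicit Defensive.
Import Order.TTheory GRing.Theory Num.Theory.
Local Open Scope classical_set_scope.
Local Open Scope ring_scope.

(* The derivative of [mu_t(A)] in [t] is [beta |h - h_c|] times the covariance
   of [1_A] with the magnetisation, i.e. the sum over torus sites [x] of
   [Cov(1_A, sigma_x)].  The torus Gibbs weight is log-supermodular, so by FKG
   each covariance is nonnegative.  For a site [x] the decomposition
   [1_A = 1_{A with x lowered} + 1_{x pivotal}] gives a first part with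
   nonnegative covariance (FKG again) and a second part contributing
   [mu(x pivotal) mu(sigma_x = -1)]; finite energy,
   [q w(s) <= w(s with x lowered)] with [q = exp (- beta flip_cost)], makes
   [mu(sigma_x = -1) >= q / 2].  As [2^k < N] the box [S(2^k)] embeds into the
   torus, so the pivotal probabilities of its sites sum to at most the sum of
   all the covariances. *)

Section WeightedSums.
Variables (R : comNzRingType) (T : finType) (w : T -> R).

Definition wsum (F : T -> R) : R := \sum_a w a * F a.

Definition wcov (F G : T -> R) : R :=
  wsum (fun a => F a * G a) * wsum (fun=> 1) - wsum F * wsum G.

Lemma eq_wsum (F G : T -> R) : F =1 G -> wsum F = wsum G.
Proof. by move=> FG; apply: eq_bigr => a _; rewrite FG. Qed.

Lemma wsumD (F G : T -> R) : wsum (fun a => F a + G a) = wsum F + wsum G.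
Proof. by rewrite /wsum -big_split; apply: eq_bigr => a _; rewrite mulrDr. Qed.

Lemma wsumB (F G : T -> R) : wsum (fun a => F a - G a) = wsum F - wsum G.
Proof. by rewrite /wsum -sumrB; apply: eq_bigr => a _; rewrite mulrBr. Qed.

Lemma wsumZ (c : R) (F : T -> R) : wsum (fun a => c * F a) = c * wsum F.
Proof. by rewrite /wsum mulr_sumr; apply: eq_bigr => a _; rewrite mulrCA. Qed.

Lemma eq_wcov (F1 F2 G1 G2 : T -> R) :
  F1 =1 F2 -> G1 =1 G2 -> wcov F1 G1 = wcov F2 G2.
Proof.
move=> eF eG; rewrite /wcov (eq_wsum eF) (eq_wsum eG).
by rewrite (eq_wsum (G := fun a => F2 a * G2 a)) // => a; rewrite eF eG.
Qed.

Lemma wsum_sum (I : finType) (F : I -> T -> R) :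
  wsum (fun a => \sum_i F i a) = \sum_i wsum (F i).
Proof.
rewrite /wsum (exchange_big_dep xpredT) //=.
by apply: eq_bigr => a _; rewrite mulr_sumr.
Qed.

Lemma wcovDr (F G1 G2 : T -> R) :
  wcov F (fun a => G1 a + G2 a) = wcov F G1 + wcov F G2.
Proof.
rewrite /wcov (eq_wsum (G := fun a => F a * G1 a + F a * G2 a)) ?wsumD; first by ring.
by move=> a; rewrite mulrDr.
Qed.

Lemma wcovDl (F1 F2 G : T -> R) :
  wcov (fun a => F1 a + F2 a) G = wcov F1 G + wcov F2 G.
Proof.
rewrite /wcov (eq_wsum (G := fun a => F1 a * G a + F2 a * G a)) ?wsumD; first by ring.
by move=> a; rewrite mulrDl.
Qed.

Lemma wcovZr (c : R) (F G : T -> R) : wcov F (fun a => c * G a) = c * wcov F G.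
Proof.
rewrite /wcov (eq_wsum (G := fun a => c * (F a * G a))) ?wsumZ; first by ring.
by move=> a; rewrite mulrCA.
Qed.

Lemma wcov_cstr (c : R) (F : T -> R) : wcov F (fun=> c) = 0.
Proof.
have cF : wsum (fun a => F a * c) = c * wsum F.
  by rewrite -wsumZ; apply: eq_wsum => a; rewrite mulrC.
have c1 : wsum (fun=> c) = c * wsum (fun=> 1).
  by rewrite -wsumZ; apply: eq_wsum => a; rewrite mulr1.
by rewrite /wcov cF c1; ring.
Qed.

Lemma wcov_sumr (I : finType) (F : T -> R) (G : I -> T -> R) :
  wcov F (fun a => \sum_i G i a) = \sum_i wcov F (G i).
Proof.
rewrite /wcov (eq_wsum (G := fun a => \sum_i F a * G i a)); last first.
  by move=> a; rewrite mulr_sumr.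
by rewrite !wsum_sum mulr_suml mulr_sumr -sumrB.
Qed.

End WeightedSums.

Lemma four_functions_pair (R : realFieldType) (a0 a1 b0 b1 c0 c1 d0 d1 : R) :
  0 <= a0 -> 0 <= a1 -> 0 <= b0 -> 0 <= b1 ->
  0 <= c0 -> 0 <= c1 -> 0 <= d0 -> 0 <= d1 ->
  a0 * b0 <= c0 * d0 -> a0 * b1 <= c1 * d0 -> a1 * b0 <= c1 * d0 ->
  a1 * b1 <= c1 * d1 ->
  (a0 + a1) * (b0 + b1) <= (c0 + c1) * (d0 + d1).
Proof.
move=> ha0 ha1 hb0 hb1 hc0 hc1 hd0 hd1 h00 h01 h10 h11.
set x := c1 * d0.
have x_ge0 : 0 <= x by apply: mulr_ge0.
suff cross : a0 * b1 + a1 * b0 <= c0 * d1 + x.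
  have -> : (a0 + a1) * (b0 + b1) = a0 * b0 + (a0 * b1 + a1 * b0) + a1 * b1 by ring.
  have -> : (c0 + c1) * (d0 + d1) = c0 * d0 + (c0 * d1 + x) + c1 * d1 by rewrite /x; ring.
  by apply: lerD => //; apply: lerD.
have [x0|x_neq0] := eqVneq x 0.
  have e1 : a0 * b1 = 0 by apply/eqP; rewrite eq_le mulr_ge0 // andbT -x0.
  have e2 : a1 * b0 = 0 by apply/eqP; rewrite eq_le mulr_ge0 // andbT -x0.
  by rewrite e1 e2 x0 !addr0 mulr_ge0.
have x_gt0 : 0 < x by rewrite lt_def x_neq0 x_ge0.
(* With [u, v <= x] and [u v <= x y]: [x (u + v) <= x^2 + u v <= x (x + y)]. *)
have prod : (a0 * b1) * (a1 * b0) <= (c0 * d1) * x.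
  have -> : (a0 * b1) * (a1 * b0) = (a0 * b0) * (a1 * b1) by ring.
  have -> : (c0 * d1) * x = (c0 * d0) * (c1 * d1) by rewrite /x; ring.
  by apply: ler_pM => //; apply: mulr_ge0.
have dev : 0 <= (x - a0 * b1) * (x - a1 * b0) by apply: mulr_ge0; rewrite subr_ge0.
rewrite -(ler_pM2l x_gt0); nra.
Qed.

Section BooleanLattice.
Variables (R : realFieldType) (I : finType).
Local Notation cfg := {ffun I -> bool}.

Definition cfg_join (a b : cfg) : cfg := [ffun i => a i || b i].
Definition cfg_meet (a b : cfg) : cfg := [ffun i => a i && b i].
Definition cfg_set (a : cfg) (x : I) (b : bool) : cfg :=
  [ffun i => if i == x then b else a i].
Definition cfg_le (a b : cfg) : Prop := forall i, a i ==> b i.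

Lemma cfg_set_join (a b : cfg) (x : I) (ba bb : bool) :
  cfg_join (cfg_set a x ba) (cfg_set b x bb) = cfg_set (cfg_join a b) x (ba || bb).
Proof. by apply/ffunP => i; rewrite !ffunE; case: eqP. Qed.

Lemma cfg_set_meet (a b : cfg) (x : I) (ba bb : bool) :
  cfg_meet (cfg_set a x ba) (cfg_set b x bb) = cfg_set (cfg_meet a b) x (ba && bb).
Proof. by apply/ffunP => i; rewrite !ffunE; case: eqP. Qed.

Lemma cfg_set_id (a : cfg) (x : I) : cfg_set a x (a x) = a.
Proof. by apply/ffunP => i; rewrite ffunE; case: eqP => [->|]. Qed.

Lemma cfg_set_false_le (a : cfg) (x : I) : cfg_le (cfg_set a x false) a.
Proof. by move=> i; rewrite ffunE; case: eqP => //; rewrite implybb. Qed.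

Definition sum_free (l : seq I) (F : cfg -> R) (e : cfg) : R :=
  \sum_(a : cfg | [forall i, (i \notin l) ==> (a i == e i)]) F a.

Lemma sum_free_nil (F : cfg -> R) (e : cfg) : sum_free [::] F e = F e.
Proof.
rewrite /sum_free (eq_bigl (pred1 e)) ?big_pred1_eq // => a /=.
apply/forallP/eqP => [agr|->]; last by move=> i; rewrite eqxx.
by apply/ffunP => i; apply/eqP; have := agr i.
Qed.

Lemma sum_free_enum (F : cfg -> R) (e : cfg) : sum_free (enum I) F e = \sum_a F a.
Proof. by apply: eq_bigl => a; apply/forallP => i; rewrite mem_enum. Qed.

Lemma sum_free_cons (x : I) (l : seq I) (F : cfg -> R) (e : cfg) : x \notin l ->
  sum_free (x :: l) F e = sum_free l F (cfg_set e x false) + sum_free l F (cfg_set e x true).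
Proof.
move=> xl; rewrite /sum_free (bigID (fun a : cfg => a x)) addrC /=.
have agree_cons b a : [forall i, (i \notin x :: l) ==> (a i == e i)] && (a x == b) =
    [forall i, (i \notin l) ==> (a i == cfg_set e x b i)].
  apply/andP/forallP => [[/forallP agr /eqP <-] i|agr]; rewrite ?ffunE.
    case: (i =P x) => [->|/eqP ix]; first by rewrite !eqxx implybT.
    by have := agr i; rewrite inE negb_or ix.
  split; last by have := agr x; rewrite xl ffunE eqxx.
  apply/forallP => i; rewrite inE negb_or; apply/implyP => /andP[ix il].
  by have := agr i; rewrite il ffunE (negbTE ix).
by congr (_ + _); apply: eq_bigl => a; rewrite -agree_cons; case: (a x).
Qed.

Lemma sum_free_ge0 (l : seq I) (F : cfg -> R) (e : cfg) :
  (forall a, 0 <= F a) -> 0 <= sum_free l F e.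
Proof. by move=> F_ge0; apply: sumr_ge0. Qed.

(* Ahlswede--Daykin: induction on the number of free coordinates. *)
Theorem four_functions (al be ga de : cfg -> R) :
  (forall a, 0 <= al a) -> (forall a, 0 <= be a) ->
  (forall a, 0 <= ga a) -> (forall a, 0 <= de a) ->
  (forall a b, al a * be b <= ga (cfg_join a b) * de (cfg_meet a b)) ->
  (\sum_a al a) * (\sum_a be a) <= (\sum_a ga a) * (\sum_a de a).
Proof.
move=> al_ge0 be_ge0 ga_ge0 de_ge0 ineq.
suff free_ineq l e1 e2 : uniq l -> sum_free l al e1 * sum_free l be e2 <=
    sum_free l ga (cfg_join e1 e2) * sum_free l de (cfg_meet e1 e2).
  have := free_ineq (enum I) [ffun=> false] [ffun=> false] (enum_uniq _).
  by rewrite !sum_free_enum.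
elim: l e1 e2 => [|x l IH] e1 e2 /=; first by rewrite !sum_free_nil.
case/andP=> xl ul; rewrite !sum_free_cons //.
have step b1 b2 : sum_free l al (cfg_set e1 x b1) * sum_free l be (cfg_set e2 x b2) <=
    sum_free l ga (cfg_set (cfg_join e1 e2) x (b1 || b2)) *
    sum_free l de (cfg_set (cfg_meet e1 e2) x (b1 && b2)).
  by rewrite -cfg_set_join -cfg_set_meet; apply: IH.
by apply: four_functions_pair; rewrite ?sum_free_ge0 //; apply: step.
Qed.

Definition cfg_nondecreasing (F : cfg -> R) : Prop :=
  forall a b, cfg_le a b -> F a <= F b.

Section LogSupermodularWeight.
Variable w : cfg -> R.
Hypothesis w_ge0 : forall a, 0 <= w a.
Hypothesis w_logsupermodular :
  forall a b, w a * w b <= w (cfg_join a b) * w (cfg_meet a b).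

Lemma wsum_ge0 (F : cfg -> R) : (forall a, 0 <= F a) -> 0 <= wsum w F.
Proof. by move=> F_ge0; apply: sumr_ge0 => a _; apply: mulr_ge0. Qed.

Theorem harris_fkg (F G : cfg -> R) :
  cfg_nondecreasing F -> cfg_nondecreasing G ->
  (forall a, 0 <= F a) -> (forall a, 0 <= G a) -> 0 <= wcov w F G.
Proof.
move=> incF incG F_ge0 G_ge0; rewrite subr_ge0.
apply: four_functions => [a|a|a|a|a b]; rewrite ?mulr1 ?mulr_ge0 //.
have le_join_l : cfg_le a (cfg_join a b) by move=> i; rewrite ffunE; case: (a i).
have le_join_r : cfg_le b (cfg_join a b).
  by move=> i; rewrite ffunE; case: (b i); rewrite ?orbT.
have -> : w a * F a * (w b * G b) = (w a * w b) * (F a * G b) by ring.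
have -> : w (cfg_join a b) * (F (cfg_join a b) * G (cfg_join a b)) * w (cfg_meet a b) =
    (w (cfg_join a b) * w (cfg_meet a b)) * (F (cfg_join a b) * G (cfg_join a b)) by ring.
apply: ler_pM; rewrite ?mulr_ge0 //.
by apply: ler_pM; [| |apply: incF|apply: incG].
Qed.

Section PivotalSite.
Variables (x : I) (q : R).
Hypothesis q_le1 : q <= 1.
Hypothesis finite_energy : forall s : cfg, s x -> q * w s <= w (cfg_set s x false).

Let up (s : cfg) : R := (s x)%:R.

Lemma wsum_down_ge : q * wsum w up <= wsum w (fun=> 1) - wsum w up.
Proof.
rewrite -wsumB; pose fl (s : cfg) := cfg_set s x (~~ s x).
have flK : involutive fl.
  by move=> s; apply/ffunP => i; rewrite !ffunE eqxx; case: eqP => [->|]; rewrite ?negbK.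
rewrite /wsum [in X in _ <= X](reindex_inj (inv_inj flK)) mulr_sumr.
apply: ler_sum => s _; rewrite /up /fl ffunE eqxx; case sx: (s x) => /=.
  by rewrite mulr1 subr0 mulr1; apply: finite_energy.
by rewrite !mulr0 subrr mulr0.
Qed.

(* [1_A] splits as [1_{A (s with x lowered)}], which is increasing, plus the
   pivotal indicator, which vanishes unless [s x]. *)
Lemma pivotal_wcov_ge (A : pred cfg) :
  (forall s s', cfg_le s s' -> A s -> A s') ->
  q * wsum w (fun s => (A s && ~~ A (cfg_set s x false))%:R) * wsum w (fun=> 1)
  <= wcov w (fun s => (A s)%:R) (fun s => if s x then 1 else -1).
Proof.
move=> A_incr.
pose down (s : cfg) : R := (A (cfg_set s x false))%:R.
pose piv (s : cfg) : R := (A s && ~~ A (cfg_set s x false))%:R.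
have splitA s : (A s)%:R = down s + piv s.
  rewrite /down /piv; have := A_incr _ _ (cfg_set_false_le s x).
  case: (A s); case: (A (cfg_set s x false)) => //= down_up.
  - by rewrite addr0.
  - by rewrite add0r.
  - by have := down_up isT.
  - by rewrite addr0.
have piv_up s : piv s * up s = piv s.
  rewrite /piv /up; case sx: (s x); rewrite ?mulr1 //.
  have -> : cfg_set s x false = s by rewrite -sx cfg_set_id.
  by rewrite andbN mul0r.
have spin_up (s : cfg) : (if s x then 1 else -1) = 2 * up s - 1 :> R.
  by rewrite /up; case: (s x) => /=; ring.
have down_incr : cfg_nondecreasing down.
  move=> a b ab; rewrite /down; case Aa: (A _) => //=.
  rewrite (A_incr _ _ _ Aa) // => i; rewrite !ffunE; case: eqP => //= _; exact: ab.
have up_incr : cfg_nondecreasing up by move=> a b /(_ x); rewrite /up; case: (a x); case: (b x).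
have cov_down : 0 <= wcov w down up by apply: harris_fkg => // s; rewrite ler0n.
have cov_piv : wcov w piv up = wsum w piv * (wsum w (fun=> 1) - wsum w up).
  by rewrite /wcov (eq_wsum w piv_up); ring.
have down_mass := wsum_down_ge.
have piv_ge0 : 0 <= wsum w piv by apply: wsum_ge0 => s; rewrite ler0n.
have down_ge0 : 0 <= wsum w (fun=> 1) - wsum w up.
  by rewrite -wsumB; apply: wsum_ge0 => s; rewrite subr_ge0 /up lern1 leq_b1.
have q_down : q * (wsum w (fun=> 1) - wsum w up) <= wsum w (fun=> 1) - wsum w up.
  by rewrite ler_piMl.
rewrite (eq_wcov w splitA spin_up) wcovDr wcovZr wcov_cstr wcovDl cov_piv addr0.
(* With [Z := wsum w 1] and [G := wsum w up]: [q Z = q G + q (Z - G) <= 2 (Z - G)],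
   and the 2 is supplied by [spin = 2 up - 1]. *)
rewrite -/piv; nra.
Qed.

End PivotalSite.
End LogSupermodularWeight.
End BooleanLattice.

Lemma tsucc_inj (N : nat) : (0 < N)%N -> injective (@tsucc N).
Proof.
move=> N_gt0 i j /(congr1 val) /=.
have side : ((N.*2).-1.+1 = N.*2)%N by rewrite prednK // double_gt0.
have i_lt : (i < N.*2)%N := leq_trans (ltn_ord i) (eq_leq side).
have j_lt : (j < N.*2)%N := leq_trans (ltn_ord j) (eq_leq side).
have mod_lt (c : nat) : (c %% N.*2 < (N.*2).-1.+1)%N by rewrite side ltn_pmod // double_gt0.
rewrite !inordK // => e; apply: val_inj => /=.
move: e i_lt j_lt; case: i j => [a ?] [b ?] /=.
have modS (c : nat) : (c < N.*2)%N -> (c.+1 %% N.*2 = if c.+1 == N.*2 then 0 else c.+1)%N.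
  move=> c_lt; case: eqP => [->|ne]; first by rewrite modnn.
  by rewrite modn_small // ltn_neqAle; apply/andP; split; [apply/eqP|].
move=> e a_lt b_lt; move: e; rewrite !modS //.
by case: eqP => ?; case: eqP => ?; lia.
Qed.

Section Torus.
Variables (R : realType) (N : nat).
Hypothesis N_gt0 : (0 < N)%N.

Lemma tright_inj : injective (@tright N).
Proof. by move=> [a b] [c d] [/(tsucc_inj N_gt0) -> ->]. Qed.

Lemma tup_inj : injective (@tup N).
Proof. by move=> [a b] [c d] [-> /(tsucc_inj N_gt0) ->]. Qed.

Definition bspin (b : bool) : R := if b then 1 else -1.

Definition site_term (h : R) (a0 a1 a2 : bool) : R :=
  bspin a0 * (bspin a1 + bspin a2) + h * bspin a0.

Lemma torusHE (h : R) (s : tconfig N) :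
  torusH h s = \sum_x site_term h (s x) (s (tright x)) (s (tup x)).
Proof. by []. Qed.

Lemma torusH_affine (h : R) (s : tconfig N) :
  torusH h s = torusH 0 s + h * \sum_x tspin s x.
Proof. by rewrite /torusH mulr_sumr -big_split; apply: eq_bigr => x _ /=; ring. Qed.

Lemma site_term_supermodular (h : R) (a0 a1 a2 b0 b1 b2 : bool) :
  site_term h a0 a1 a2 + site_term h b0 b1 b2 <=
  site_term h (a0 || b0) (a1 || b1) (a2 || b2) + site_term h (a0 && b0) (a1 && b1) (a2 && b2).
Proof.
by case: a0; case: a1; case: a2; case: b0; case: b1; case: b2; rewrite /site_term /bspin /=; lra.
Qed.

Lemma torusH_supermodular (h : R) (a b : tconfig N) :
  torusH h a + torusH h b <= torusH h (cfg_join a b) + torusH h (cfg_meet a b).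
Proof.
rewrite !torusHE -!big_split; apply: ler_sum => x _; rewrite !ffunE.
exact: site_term_supermodular.
Qed.

Lemma site_term_diff_le (h : R) (a0 a1 a2 b0 b1 b2 : bool) :
  site_term h a0 a1 a2 - site_term h b0 b1 b2 <= 4 + 2 * `|h|.
Proof.
have := ler_norm h; have := ler_norm (- h); rewrite normrN.
by case: a0; case: a1; case: a2; case: b0; case: b1; case: b2; rewrite /site_term /bspin /=; lra.
Qed.

Lemma sum_indicator_inj (x : tsite N) (F : tsite N -> tsite N) :
  injective F -> \sum_y ((F y == x)%:R : R) = 1.
Proof.
move=> F_inj; rewrite -(reindex_inj F_inj (P := xpredT) (F := fun y => ((y == x)%:R : R))).
by rewrite (bigD1 x) //= eqxx big1 ?addr0 // => y /negbTE ->.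
Qed.

(* Only the three site terms at [x], [x - e1] and [x - e2] see the spin at [x]. *)
Lemma torusH_local_diff (h : R) (s s' : tconfig N) (x : tsite N) :
  (forall y, y != x -> s y = s' y) -> torusH h s - torusH h s' <= 3 * (4 + 2 * `|h|).
Proof.
move=> ss'; set c := 4 + 2 * `|h|.
have c_ge0 : 0 <= c by rewrite addr_ge0 // mulr_ge0.
pose hits y : R := (y == x)%:R + (tright y == x)%:R + (tup y == x)%:R.
apply: (@le_trans _ _ (\sum_y c * hits y)).
  rewrite !torusHE -sumrB; apply: ler_sum => y _.
  have [hit|miss] := boolP ((y == x) || (tright y == x) || (tup y == x)).
    apply: le_trans (site_term_diff_le _ _ _ _ _ _ _) _.
    rewrite ler_peMr // /hits.
    rewrite -!natrD ler1n.
    by move: hit; case: (y == x); case: (tright y == x); case: (tup y == x).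
  move: miss; rewrite !negb_or => /andP[/andP[y_x ry_x] uy_x].
  by rewrite /hits (negbTE y_x) (negbTE ry_x) (negbTE uy_x) !ss' // subrr !addr0 mulr0.
have id_hits : \sum_y ((y == x)%:R : R) = 1 := sum_indicator_inj x (@inj_id _).
rewrite -mulr_sumr !big_split /= id_hits (sum_indicator_inj x tright_inj).
by rewrite (sum_indicator_inj x tup_inj); lra.
Qed.

End Torus.

Lemma zrange_uniq (n : nat) : uniq (zrange n).
Proof. by rewrite map_inj_uniq ?iota_uniq // => i j; lia. Qed.

Lemma mem_zrange (n : nat) (a : int) : a \in zrange n -> (`|a| <= n)%N.
Proof. by case/mapP => i; rewrite mem_iota add0n -addnn => /andP[_ i_lt] ->; lia. Qed.

Lemma boxseq_uniq (n : nat) : uniq (boxseq n).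
Proof. by apply: allpairs_uniq; rewrite ?zrange_uniq // => -[a b] [c d] _ _ /= ->. Qed.

Lemma mem_boxseq (n : nat) (v : site) : v \in boxseq n -> inbox n v.
Proof.
case/allpairsP => -[a b] /= [a_in b_in ->].
by rewrite /inbox /= (mem_zrange a_in) (mem_zrange b_in).
Qed.

Lemma tproj_coord (N : nat) (z : int) : (`|z| < N)%N ->
  (nat_of_ord (inord `|(z %% (N.*2)%:Z)%Z|%N : tside N))%:Z =
  if 0 <= z then z else z + (N.*2)%:Z.
Proof.
move=> z_lt; have modE : (z %% (N.*2)%:Z)%Z = if 0 <= z then z else z + (N.*2)%:Z.
  case: ifP => z_ge0; first by apply: modz_small; apply/andP; split; lia.
  by rewrite -modzDr modz_small //; apply/andP; split; lia.
have mod_ge0 : 0 <= (z %% (N.*2)%:Z)%Z by rewrite modE; case: ifP; lia.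
rewrite inordK; first by rewrite gez0_abs.
rewrite prednK; last by lia.
have : `|(z %% (N.*2)%:Z)%Z|%:Z < (N.*2)%:Z by rewrite gez0_abs // modE; case: ifP; lia.
lia.
Qed.

Lemma tproj_inj_box (N M : nat) (u v : site) : (M < N)%N ->
  inbox M u -> inbox M v -> tproj N u = tproj N v -> u = v.
Proof.
move: u v => [a b] [c d] MN /andP[/= a_le b_le] /andP[/= c_le d_le] [ac bd].
have := tproj_coord (leq_ltn_trans a_le MN).
rewrite ac tproj_coord; last exact: leq_ltn_trans c_le MN.
have := tproj_coord (leq_ltn_trans b_le MN).
rewrite bd tproj_coord; last exact: leq_ltn_trans d_le MN.
by move=> eq_bd eq_ac; congr (_, _); [move: eq_ac | move: eq_bd]; case: ifP; case: ifP; lia.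
Qed.

Lemma sum_boxseq_le (R : realDomainType) (N M : nat) (P : pred site) (G : tsite N -> R) :
  (M < N)%N -> (forall x, 0 <= G x) ->
  \sum_(v <- boxseq M | P v) G (tproj N v) <= \sum_x G x.
Proof.
move=> MN G_ge0; rewrite -big_filter -(big_map (tproj N) xpredT G).
have proj_uniq : uniq [seq tproj N v | v <- boxseq M & P v].
  rewrite map_inj_in_uniq ?filter_uniq ?boxseq_uniq // => u v.
  rewrite !mem_filter => /andP[_ /mem_boxseq u_in] /andP[_ /mem_boxseq v_in].
  exact: tproj_inj_box MN u_in v_in.
rewrite big_uniq //= [leRHS](bigID (mem [seq tproj N v | v <- boxseq M & P v])) /=.
by rewrite lerDl sumr_ge0.
Qed.

Definition config_set (w : config) (v : site) (b : bool) : config :=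
  fun x => if x == v then b else w x.

Lemma increasing_pivotalE (A : set config) (v : site) (w : config) : increasing A ->
  (A `&` Delta v A) w <-> A w /\ ~ A (config_set w v false).
Proof.
move=> A_incr; rewrite /Delta /=; have [wv|wv] := boolP (w v).
  have -> : flip v w = config_set w v false by apply/funext => x; rewrite /flip wv.
  by split => [[Aw [[_ nA]|[]]]|[Aw nA]]; do ?split; do ?left.
have w_down : config_set w v false = w.
  by apply/funext => x; rewrite /config_set; case: eqP => [->|]; rewrite ?(negbTE wv).
rewrite w_down; split => [[Aw [[_ nA]|[nAw _]]]|[Aw nAw]] //; exfalso; apply: nA.
by apply: A_incr Aw => x; rewrite /flip; case: eqP => [->|_]; rewrite ?(negbTE wv) ?implybb.
Qed.

Definition tevent (N : nat) (A : set config) (s : tconfig N) : bool := `[< A (text s) >].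

Section BoxEvent.
Variables (N M : nat) (A : set config).
Hypothesis MN : (M < N)%N.
Hypothesis A_incr : increasing A.
Hypothesis A_local : local_in (inbox M) A.

Lemma tevent_mono (s s' : tconfig N) : cfg_le s s' -> tevent A s -> tevent A s'.
Proof. by move=> ss' /asboolP As; apply/asboolP; apply: A_incr As => y; apply: ss'. Qed.

Lemma text_set (s : tconfig N) (v : site) (b : bool) :
  inbox M v -> forall y, inbox M y ->
  text (cfg_set s (tproj N v) b) y = config_set (text s) v b y.
Proof.
move=> v_in y y_in; rewrite /text /config_set ffunE.
case: (y =P v) => [->|y_v]; first by rewrite eqxx.
by case: eqP => // /(tproj_inj_box MN y_in v_in).
Qed.

Lemma tevent_pivotal (s : tconfig N) (v : site) : inbox M v ->
  `[< (A `&` Delta v A) (text s) >] =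
  tevent A s && ~~ tevent A (cfg_set s (tproj N v) false).
Proof.
move=> v_in.
have Aset : A (text (cfg_set s (tproj N v) false)) <-> A (config_set (text s) v false).
  exact/A_local/text_set.
apply/asboolP/andP => [/(increasing_pivotalE _ _ A_incr) [As nA]|[/asboolP As /negP nA]].
  by split; [apply/asboolP | apply/negP => /asboolP /Aset].
apply/increasing_pivotalE => //; split => // /Aset A_down; apply: nA; exact/asboolP.
Qed.

End BoxEvent.

Section Derivatives.
Variable R : realType.

Lemma is_derive_affine (t c l : R) : is_derive t 1 (fun u : R => c + u * l) l.
Proof.
have -> : (fun u : R => c + u * l) = cst c + l \*: (@id R).
  by apply/funext => u /=; rewrite mulrC.
have := is_deriveD (is_derive_cst c t 1) (is_deriveZ l (is_derive_id t (1 : R))).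
move/is_derive_eq; apply.
by rewrite add0r /GRing.scale /= mulr1.
Qed.

Lemma is_derive_expR_affine (t c l : R) :
  is_derive t 1 (fun u : R => expR (c + u * l)) (expR (c + t * l) * l).
Proof. exact: is_derive1_comp (is_derive_expR _) (is_derive_affine t c l). Qed.

Lemma is_derive_fsum (I : finType) (F : I -> R -> R) (dF : I -> R) (t : R) :
  (forall i, is_derive t 1 (F i) (dF i)) ->
  is_derive t 1 (fun u => \sum_i F i u) (\sum_i dF i).
Proof.
move=> dFi; rewrite unlock /reducebig.
elim: (index_enum I) => [|i r IH] /=; first exact: is_derive_cst.
exact: is_deriveD.
Qed.

Lemma is_derive_div (f g : R -> R) (t df dg : R) :
  g t != 0 -> is_derive t 1 f df -> is_derive t 1 g dg ->
  is_derive t 1 (fun u => f u / g u) ((df * g t - f t * dg) / g t ^+ 2).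
Proof.
move=> gt_neq0 f_df g_dg.
have -> : (fun u => f u / g u) = f * (fun u => (g u)^-1) by [].
move/is_derive_eq: (is_deriveM f_df (is_deriveV gt_neq0 g_dg)); apply.
by rewrite /GRing.scale /=; field.
Qed.

End Derivatives.

Section TiltedMean.
Variables (R : realType) (I : finType) (c l : I -> R).

Definition tilt (u : R) (i : I) : R := expR (c i + u * l i).

Lemma wsum_tilt_gt0 (i0 : I) (u : R) : 0 < wsum (tilt u) (fun=> 1).
Proof.
rewrite /wsum (bigD1 i0) //= mulr1 ltr_pwDl ?expR_gt0 //.
by apply: sumr_ge0 => i _; rewrite mulr1 ltW ?expR_gt0.
Qed.

Lemma is_derive_tilted_mean (i0 : I) (f : I -> R) (t : R) :
  is_derive t 1 (fun u => wsum (tilt u) f / wsum (tilt u) (fun=> 1))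
    (wcov (tilt t) f l / wsum (tilt t) (fun=> 1) ^+ 2).
Proof.
have d_wsum (g : I -> R) : is_derive t 1 (fun u => wsum (tilt u) g)
    (wsum (tilt t) (fun i => g i * l i)).
  apply: is_derive_fsum => i.
  have := is_deriveM (is_derive_expR_affine t (c i) (l i)) (is_derive_cst (g i) t 1).
  by move/is_derive_eq; apply; rewrite /tilt /GRing.scale /=; ring.
move/is_derive_eq: (is_derive_div (lt0r_neq0 (wsum_tilt_gt0 i0 t)) (d_wsum f) (d_wsum (fun=> 1))).
apply.
by rewrite /wcov (@eq_wsum _ _ (tilt t) (fun i => 1 * l i) l) // => i; rewrite mul1r.
Qed.

End TiltedMean.

Lemma Tc_ge0 (R : realType) (K : R) : 0 <= Tc K.
Proof.
rewrite /Tc; set S := [set _ | _].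
have [S_sup|S_nosup] := pselect (has_sup S); last by rewrite sup_out.
case: (S_sup) => -[T0 S_T0] _.
apply: le_trans (sup_upper_bound S_sup S_T0).
by case: S_T0 => /ltW.
Qed.

Section Periodic.
Variables (R : realType) (K T h : R) (N : nat).

Definition magnetization (s : tconfig N) : R := \sum_x tspin s x.

(* [beta * torusH (hpath u)] is affine in [u]: base plus [u] times slope. *)
Definition gibbs_base (s : tconfig N) : R :=
  beta_of K T * (torusH 0 s + hpath K T h 0 * magnetization s).
Definition gibbs_slope (s : tconfig N) : R :=
  beta_of K T * `|h - hc K T| * magnetization s.

Definition flip_cost : R := 3 * (4 + 2 * (`|h| + `|hc K T|)).

Lemma hpath_affine (u : R) : hpath K T h u = hpath K T h 0 + u * `|h - hc K T|.
Proof.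
rewrite /hpath !mul0r !addr0; case: ifP => hc_lt; first by rewrite gtr0_norm ?subr_gt0.
by rewrite ler0_norm ?opprB // subr_le0 leNgt hc_lt.
Qed.

Lemma hpath_norm_le (u : R) : 0 <= u <= 1 -> `|hpath K T h u| <= `|h| + `|hc K T|.
Proof.
move=> /andP[u_ge0 u_le1].
have convex (a b : R) : `|a + u * (b - a)| <= `|a| + `|b|.
  have -> : a + u * (b - a) = (1 - u) * a + u * b by ring.
  apply: le_trans (ler_normD _ _) _.
  rewrite !normrM (ger0_norm u_ge0) ger0_norm ?subr_ge0 //.
  have := ler_wpM2r (normr_ge0 a) (_ : 1 - u <= 1); have := ler_wpM2r (normr_ge0 b) u_le1.
  by rewrite !mul1r; lra.
rewrite /hpath; case: ifP => _; last exact: convex.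
by rewrite [leRHS]addrC; apply: convex.
Qed.

Lemma tilt_gibbsE (u : R) (s : tconfig N) :
  tilt gibbs_base gibbs_slope u s = expR (beta_of K T * torusH (hpath K T h u) s).
Proof.
rewrite /tilt /gibbs_base /gibbs_slope [in RHS]torusH_affine (hpath_affine u).
by rewrite /magnetization; congr expR; ring.
Qed.

Lemma mut_tilted (B : set config) (u : R) :
  mut K T h N u B = wsum (tilt gibbs_base gibbs_slope u) (fun s => (tevent B s)%:R) /
                    wsum (tilt gibbs_base gibbs_slope u) (fun=> 1).
Proof.
rewrite /mut /muN /wsum; congr (_ / _); apply: eq_bigr => s _; rewrite tilt_gibbsE.
  by rewrite /tevent; case: asboolP; rewrite ?mulr1 ?mulr0.
by rewrite mulr1.
Qed.

Hypotheses (K_gt0 : 0 < K) (T_gt0 : 0 < T) (N_gt0 : (0 < N)%N).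

Lemma beta_of_ge0 : 0 <= beta_of K T.
Proof. by rewrite invr_ge0 mulr_ge0 // ltW. Qed.

Lemma tilt_gibbs_logsupermodular (u : R) (a b : tconfig N) :
  let w := tilt gibbs_base gibbs_slope u in w a * w b <= w (cfg_join a b) * w (cfg_meet a b).
Proof.
rewrite /= !tilt_gibbsE -!expRD ler_expR -!mulrDr.
apply: ler_wpM2l; first exact: beta_of_ge0.
exact: torusH_supermodular.
Qed.

Lemma tilt_gibbs_finite_energy (u : R) (x : tsite N) (s : tconfig N) : 0 <= u <= 1 ->
  let w := tilt gibbs_base gibbs_slope u in
  expR (- (beta_of K T * flip_cost)) * w s <= w (cfg_set s x false).
Proof.
move=> u01 /=; rewrite !tilt_gibbsE -expRD ler_expR.
have diff : torusH (hpath K T h u) s - torusH (hpath K T h u) (cfg_set s x false) <= flip_cost.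
  apply: le_trans (torusH_local_diff N_gt0 _ (x := x) _) _.
    by move=> y y_x; rewrite ffunE (negbTE y_x).
  by have := hpath_norm_le u01; rewrite /flip_cost; lra.
have := ler_wpM2l beta_of_ge0 diff; rewrite mulrBr; lra.
Qed.

Lemma tilt_gibbs_pivotal_wcov_ge (A : set config) (t : R) (x : tsite N) :
  increasing A -> 0 <= t <= 1 ->
  let w := tilt gibbs_base gibbs_slope t in
  expR (- (beta_of K T * flip_cost)) *
    wsum w (fun s => (tevent A s && ~~ tevent A (cfg_set s x false))%:R) * wsum w (fun=> 1)
  <= wcov w (fun s => (tevent A s)%:R) (fun s => tspin s x).
Proof.
move=> A_incr t01; apply: pivotal_wcov_ge => [s|a b|||s s'].
- exact/ltW/expR_gt0.
- exact: tilt_gibbs_logsupermodular.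
- by rewrite expR_le1 oppr_le0 mulr_ge0 ?beta_of_ge0 // /flip_cost !(mulr_ge0, addr_ge0).
- by move=> s _; apply: tilt_gibbs_finite_energy.
- exact: tevent_mono.
Qed.

Lemma mut_pivotal_tilted (M : nat) (A : set config) (t : R) (v : site) :
  (M < N)%N -> increasing A -> local_in (inbox M) A -> v \in boxseq M ->
  let w := tilt gibbs_base gibbs_slope t in
  mut K T h N t (A `&` Delta v A) =
  wsum w (fun s => (tevent A s && ~~ tevent A (cfg_set s (tproj N v) false))%:R) /
  wsum w (fun=> 1).
Proof.
move=> MN A_incr A_local /mem_boxseq v_in /=; rewrite mut_tilted; congr (_ / _).
by apply: eq_wsum => s; rewrite /tevent (tevent_pivotal MN A_incr A_local _ v_in).
Qed.

Lemma mut_derive_ge (M : nat) (A : set config) (t : R) :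
  (M < N)%N -> increasing A -> local_in (inbox M) A -> 0 <= t <= 1 ->
  derivable (fun u => mut K T h N u A) t 1 /\
  expR (- (beta_of K T * flip_cost)) * (`|h - hc K T| / (K * T)) *
    (\sum_(v <- boxseq M | `[< Supp A v >]) mut K T h N t (A `&` Delta v A))
  <= derive1 (fun u => mut K T h N u A) t.
Proof.
move=> MN A_incr A_local t01.
set q := expR _; set w := tilt gibbs_base gibbs_slope t; set Z := wsum w (fun=> 1).
pose fA (s : tconfig N) : R := (tevent A s)%:R.
have Z_gt0 : 0 < Z := wsum_tilt_gt0 _ _ [ffun=> false] t.
have der := is_derive_tilted_mean gibbs_base gibbs_slope [ffun=> false] fA t.
have mutE : (fun u => mut K T h N u A) = fun u =>
    wsum (tilt gibbs_base gibbs_slope u) fA / wsum (tilt gibbs_base gibbs_slope u) (fun=> 1).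
  by apply/funext => u; apply: mut_tilted.
rewrite mutE; split; first by case: der.
rewrite derive1E (@derive_val _ _ _ _ _ _ _ der) -/w -/Z.
have cov_sites : wcov w fA gibbs_slope =
    beta_of K T * `|h - hc K T| * \sum_x wcov w fA (fun s => tspin s x).
  by rewrite -wcov_sumr -wcovZr.
have sites_ge0 x : 0 <= wcov w fA (fun s => tspin s x).
  apply: le_trans (tilt_gibbs_pivotal_wcov_ge x A_incr t01).
  rewrite mulr_ge0 ?(ltW Z_gt0) // mulr_ge0 ?(ltW (expR_gt0 _)) //.
  by apply: sumr_ge0 => s _; rewrite mulr_ge0 ?ler0n // ltW ?expR_gt0.
set S := \sum_(v <- _ | _) _.
have S_le : q * Z ^+ 2 * S <= \sum_x wcov w fA (fun s => tspin s x).
  apply: le_trans (sum_boxseq_le (fun v => `[< Supp A v >]) MN sites_ge0).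
  rewrite /S mulr_sumr big_seq_cond [leRHS]big_seq_cond; apply: ler_sum => v /andP[v_in _].
  rewrite (mut_pivotal_tilted t MN A_incr A_local v_in) -/w -/Z; set P := wsum w _.
  have -> : q * Z ^+ 2 * (P / Z) = q * P * Z by field; rewrite gt_eqF.
  exact: tilt_gibbs_pivotal_wcov_ge.
rewrite cov_sites ler_pdivlMr ?exprn_gt0 //.
have -> : q * (`|h - hc K T| / (K * T)) * S * Z ^+ 2 =
    beta_of K T * `|h - hc K T| * (q * Z ^+ 2 * S) by rewrite /beta_of; ring.
by apply: ler_wpM2l S_le; rewrite mulr_ge0 ?beta_of_ge0.
Qed.

End Periodic.

Theorem lemma8p3 (R : realType) (K T h : R) :
  0 < K -> Tc K < T ->
  0 < h -> h < 2 * hc K T -> h != hc K T ->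
  exists C17 : R, 0 < C17 /\
    forall (k N : nat), (2 ^ k < N)%N ->
    forall A : set config, increasing A -> local_in (inbox (2 ^ k)) A ->
    forall t : R, 0 <= t <= 1 ->
      derivable (fun s => mut K T h N s A) t 1 /\
      C17 * (`|h - hc K T| / (K * T)) *
        (\sum_(v <- boxseq (2 ^ k) | `[< Supp A v >]) mut K T h N t (A `&` Delta v A))
      <= derive1 (fun s => mut K T h N s A) t.
Proof.
move=> K_gt0 Tc_lt_T _ _ _.
have T_gt0 : 0 < T := le_lt_trans (Tc_ge0 K) Tc_lt_T.
exists (expR (- (beta_of K T * flip_cost K T h))); split; first exact: expR_gt0.
move=> k N kN A A_incr A_local t t01.
have N_gt0 : (0 < N)%N := leq_ltn_trans (leq0n _) kN.
exact (mut_derive_ge h K_gt0 T_gt0 N_gt0 kN A_incr A_local t01).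
Qed.
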